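(* Let $K\subset\mathbb E$ be a regular cone and $F$ a normal barrier for $K$. The following are equivalent: (1) $F$ has negative curvature; (2) for every $x\in\operatorname{int}K$ and $h\in\mathbb E$, $-\nabla^3F(x)[h,h]\in K^*$; (3) for every $x\in\operatorname{int}K$ and $h\in\mathbb E$ with $x+h\in\operatorname{int}K$, $\nabla^2F(x)h-(\nabla F(x+h)-\nabla F(x))\in K^*$.
   Context: $\mathbb E$ finite-dimensional real space, dual $\mathbb E^*$, pairing $\langle\cdot,\cdot\rangle$. $K$ regular: closed, convex, pointed, nonempty interior; $K^*=\{s\in\mathbb E^*:\langle s,x\rangle\ge0\ \forall x\in K\}$. A normal barrier for $K$ is a self-concordant barrier $F$ on $\operatorname{int}K$ which is logarithmically homogeneous: $F(\tau x)=F(x)-\nu\ln\tau$ for some $\nu$ and all $\tau>0$. $\nabla^3F(x)[h]$ denotes the self-adjoint operator $\mathbb E\to\mathbb E^*$ with $\langle\nabla^3F(x)[h]u,w\rangle=D^3F(x)[h,u,w]$, and $\nabla^3F(x)[h,h]\in\mathbb E^*$ is the vector $u\mapsto D^3F(x)[h,h,u]$. Definition: $F$ has negative curvature if $\nabla^3F(x)[h]\preceq0$ (i.e. $D^3F(x)[h,u,u]\le0$ for all $u\in\mathbb E$) for every $x\in\operatorname{int}K$ and every $h\in K$. *)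

(* classical reals.  E = R^n, realised as functions Fin.t n -> R;
   E^* is identified with R^n through the standard inner product [dot]. *)
From Stdlib Require Import Reals.
From Stdlib Require Vectors.Fin.
Open Scope R_scope.

Definition vec (n : nat) := Fin.t n -> R.

Definition vadd {n} (x y : vec n) : vec n := fun i => x i + y i.
Definition vopp {n} (x : vec n) : vec n := fun i => - x i.
Definition vscale {n} (t : R) (x : vec n) : vec n := fun i => t * x i.
Definition vsub {n} (x y : vec n) : vec n := vadd x (vopp y).

Fixpoint dot {n : nat} : vec n -> vec n -> R :=
  match n return vec n -> vec n -> R with
  | O => fun _ _ => 0
  | S m => fun x y => x Fin.F1 * y Fin.F1
             + dot (fun i => x (Fin.FS i)) (fun i => y (Fin.FS i))
  end.

Definition vnorm {n} (x : vec n) : R := sqrt (dot x x).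
Definition vdist {n} (x y : vec n) : R := vnorm (vsub x y).

Definition ebasis {n} (i : Fin.t n) : vec n :=
  fun j => if Fin.eq_dec i j then 1 else 0.

Definition int_set {n} (K : vec n -> Prop) (x : vec n) : Prop :=
  exists eps, 0 < eps /\ forall y, vdist y x < eps -> K y.
Definition closed_set {n} (K : vec n -> Prop) : Prop :=
  forall x, (forall eps, 0 < eps -> exists y, K y /\ vdist y x < eps) -> K x.
Definition seq_cv {n} (xs : nat -> vec n) (l : vec n) : Prop :=
  forall eps, 0 < eps -> exists N, forall k, (N <= k)%nat -> vdist (xs k) l < eps.

Definition convex_cone {n} (K : vec n -> Prop) : Prop :=
  (exists x, K x) /\
  (forall x t, K x -> 0 <= t -> K (vscale t x)) /\
  (forall x y, K x -> K y -> K (vadd x y)).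
Definition pointed {n} (K : vec n -> Prop) : Prop :=
  forall x, K x -> K (vopp x) -> x = (fun _ => 0).
Definition regular_cone {n} (K : vec n -> Prop) : Prop :=
  closed_set K /\ convex_cone K /\ pointed K /\ exists x, int_set K x.

Definition dual_cone {n} (K : vec n -> Prop) (s : vec n) : Prop :=
  forall x, K x -> 0 <= dot s x.

Definition gderiv {n} (U : vec n -> Prop) (f : vec n -> R) (Df : vec n -> vec n -> R)
  : Prop :=
  forall x, U x -> forall h,
    derivable_pt_lim (fun t => f (vadd x (vscale t h))) 0 (Df x h).

Definition cont_on {n} (U : vec n -> Prop) (g : vec n -> R) : Prop :=
  forall x, U x -> forall eps, 0 < eps ->
    exists delta, 0 < delta /\
      forall y, U y -> vdist y x < delta -> Rabs (g y - g x) < eps.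

(* F is C^3 on U with  D1 x h = DF(x)[h],  D2 x h u = D^2F(x)[h,u],
   D3 x h u w = D^3F(x)[h,u,w]  (the derivatives are continuous). *)
Definition C3_with {n} (U : vec n -> Prop) (F : vec n -> R)
  (D1 : vec n -> vec n -> R) (D2 : vec n -> vec n -> vec n -> R)
  (D3 : vec n -> vec n -> vec n -> vec n -> R) : Prop :=
  gderiv U F D1 /\
  (forall h, gderiv U (fun x => D1 x h) (fun x u => D2 x h u)) /\
  (forall h u, gderiv U (fun x => D2 x h u) (fun x w => D3 x h u w)) /\
  (forall h, cont_on U (fun x => D1 x h)) /\
  (forall h u, cont_on U (fun x => D2 x h u)) /\
  (forall h u w, cont_on U (fun x => D3 x h u w)).

Definition grad {n} (D1 : vec n -> vec n -> R) (x : vec n) : vec n :=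
  fun i => D1 x (ebasis i).
Definition hess_app {n} (D2 : vec n -> vec n -> vec n -> R) (x h : vec n) : vec n :=
  fun i => D2 x h (ebasis i).
Definition third_app {n} (D3 : vec n -> vec n -> vec n -> vec n -> R)
  (x h u : vec n) : vec n :=
  fun i => D3 x h u (ebasis i).

Definition self_concordant_barrier {n} (K : vec n -> Prop) (F : vec n -> R) (nu : R)
  (D1 : vec n -> vec n -> R) (D2 : vec n -> vec n -> vec n -> R)
  (D3 : vec n -> vec n -> vec n -> vec n -> R) : Prop :=
  let U := int_set K in
  C3_with U F D1 D2 D3 /\
  (forall x y t, U x -> U y -> 0 <= t <= 1 ->
     F (vadd (vscale t x) (vscale (1 - t) y)) <= t * F x + (1 - t) * F y) /\
  (forall (xs : nat -> vec n) xb, (forall k, U (xs k)) -> seq_cv xs xb -> ~ U xb ->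
     forall M, exists N, forall k, (N <= k)%nat -> M < F (xs k)) /\
  (forall x h, U x ->
     Rabs (D3 x h h h) <= 2 * (D2 x h h * sqrt (D2 x h h))) /\
  (forall x h, U x -> (D1 x h) ^ 2 <= nu * D2 x h h).

Definition normal_barrier {n} (K : vec n -> Prop) (F : vec n -> R) (nu : R)
  D1 D2 D3 : Prop :=
  self_concordant_barrier K F nu D1 D2 D3 /\
  (forall x tau, int_set K x -> 0 < tau -> F (vscale tau x) = F x - nu * ln tau).

Definition negative_curvature {n} (K : vec n -> Prop)
  (D3 : vec n -> vec n -> vec n -> vec n -> R) : Prop :=
  forall x h, int_set K x -> K h -> forall u, D3 x h u u <= 0.

(* Pairing with y in K turns all three conditions into scalar ones.  By Schwarz symmetry
   D^3F(x)[h,h,y] = D^3F(x)[y,h,h], so (2) says D^3F(x)[y,h,h] <= 0 for y in K, which is (1).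
   For (3), the mean value theorem applied twice along the segment [x, x+h] gives
     DF(x+h)[y] - DF(x)[y] - D^2F(x)[y,h] = c D^3F(x+dh)[y,h,h],   0 < d < c < 1,
   which is <= 0 under (2); conversely, if D^3F(x)[y,h,h] > 0 then by continuity the same
   identity for a short step s h contradicts (3).  Gradient and Hessian are coordinate vectors
   of the directional derivatives, which are linear because they are continuous. *)

From Stdlib Require Import Reals Lra FunctionalExtensionality.
From Stdlib Require Vectors.Fin.
Open Scope R_scope.

Ltac vec_ext := apply functional_extensionality; intro; unfold vsub, vadd, vscale, vopp; ring.

Lemma dot_add_l n (a b c : vec n) : dot (vadd a b) c = dot a c + dot b c.
Proof.
  induction n as [|n IH]; simpl; [ring|].
  unfold vadd in *. rewrite IH. ring.
Qed.

Lemma dot_scale_l n t (a c : vec n) : dot (vscale t a) c = t * dot a c.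
Proof.
  induction n as [|n IH]; simpl; [ring|].
  unfold vscale in *. rewrite IH. ring.
Qed.

Lemma dot_comm n (a c : vec n) : dot a c = dot c a.
Proof. induction n as [|n IH]; simpl; [ring|]. rewrite IH. ring. Qed.

Lemma dot_opp_l n (a c : vec n) : dot (vopp a) c = - dot a c.
Proof.
  replace (vopp a) with (vscale (-1) a) by vec_ext. rewrite dot_scale_l. ring.
Qed.

Lemma dot_sub_l n (a b c : vec n) : dot (vsub a b) c = dot a c - dot b c.
Proof. unfold vsub. rewrite dot_add_l, dot_opp_l. ring. Qed.

Lemma dot_self_nonneg n (a : vec n) : 0 <= dot a a.
Proof.
  induction n as [|n IH]; simpl; [lra|].
  specialize (IH (fun i => a (Fin.FS i))). nra.
Qed.

Lemma cauchy_schwarz_step a b S A B : 0 <= A -> 0 <= B -> S ^ 2 <= A * B ->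
  (a * b + S) ^ 2 <= (a * a + A) * (b * b + B).
Proof.
  intros HA HB HS.
  assert (HQ : (2 * (a * b * S)) ^ 2 <= (a * a * B + b * b * A) ^ 2).
  { pose proof (pow2_ge_0 (a * a * B - b * b * A)).
    pose proof (pow2_ge_0 (a * b)).
    assert ((a * b) ^ 2 * S ^ 2 <= (a * b) ^ 2 * (A * B)) by (apply Rmult_le_compat_l; lra).
    nra. }
  assert (HP : 0 <= a * a * B + b * b * A) by nra.
  assert (2 * (a * b * S) <= a * a * B + b * b * A).
  { destruct (Rle_or_lt (2 * (a * b * S)) (a * a * B + b * b * A)); nra. }
  nra.
Qed.

Lemma dot_cauchy_schwarz n (a b : vec n) : dot a b ^ 2 <= dot a a * dot b b.
Proof.
  induction n as [|n IH]; simpl; [lra|].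
  apply cauchy_schwarz_step; [apply dot_self_nonneg | apply dot_self_nonneg | apply IH].
Qed.

Lemma vnorm_nonneg n (a : vec n) : 0 <= vnorm a.
Proof. apply sqrt_pos. Qed.

Lemma vnorm_sq n (a : vec n) : vnorm a * vnorm a = dot a a.
Proof. apply sqrt_sqrt, dot_self_nonneg. Qed.

Lemma dot_le_vnorm n (a b : vec n) : dot a b <= vnorm a * vnorm b.
Proof.
  apply Rle_trans with (Rabs (dot a b)); [apply Rle_abs|].
  rewrite <- (Rabs_pos_eq (vnorm a * vnorm b))
    by (apply Rmult_le_pos; apply vnorm_nonneg).
  apply Rsqr_le_abs_0. unfold Rsqr.
  replace (vnorm a * vnorm b * (vnorm a * vnorm b))
    with (vnorm a * vnorm a * (vnorm b * vnorm b)) by ring.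
  rewrite !vnorm_sq. pose proof (dot_cauchy_schwarz n a b). simpl in H. lra.
Qed.

Lemma vnorm_add_le n (a b : vec n) : vnorm (vadd a b) <= vnorm a + vnorm b.
Proof.
  pose proof (vnorm_nonneg n a). pose proof (vnorm_nonneg n b).
  unfold vnorm at 1. rewrite <- (sqrt_square (vnorm a + vnorm b)) by lra.
  apply sqrt_le_1_alt.
  rewrite dot_add_l, (dot_comm n a), (dot_comm n b), !dot_add_l, (dot_comm n b a).
  pose proof (vnorm_sq n a). pose proof (vnorm_sq n b). pose proof (dot_le_vnorm n a b).
  nra.
Qed.

Lemma vnorm_scale n t (a : vec n) : vnorm (vscale t a) = Rabs t * vnorm a.
Proof.
  unfold vnorm. rewrite dot_scale_l, (dot_comm n a), dot_scale_l, <- Rmult_assoc.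
  rewrite sqrt_mult by (nra || apply dot_self_nonneg).
  fold (Rsqr t). rewrite sqrt_Rsqr_abs. reflexivity.
Qed.

Lemma vdist_triangle n (x y z : vec n) : vdist x z <= vdist x y + vdist y z.
Proof.
  unfold vdist. replace (vsub x z) with (vadd (vsub x y) (vsub y z)) by vec_ext.
  apply vnorm_add_le.
Qed.

Definition open_set {n} (U : vec n -> Prop) : Prop :=
  forall x, U x -> exists r, 0 < r /\ forall y, vdist y x < r -> U y.

Lemma int_set_open n (K : vec n -> Prop) : open_set (int_set K).
Proof.
  intros x [e [He H]]. exists (e / 2). split; [lra|].
  intros y Hy. exists (e / 2). split; [lra|]. intros z Hz. apply H.
  pose proof (vdist_triangle n z y x). lra.
Qed.

Definition plane {n} (x a b : vec n) (s t : R) : vec n :=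
  vadd (vadd x (vscale s a)) (vscale t b).

Lemma plane_swap n (x a b : vec n) s t : plane x a b s t = plane x b a t s.
Proof. unfold plane. vec_ext. Qed.

Lemma plane_line n (x a b : vec n) s : plane x a b s 0 = vadd x (vscale s a).
Proof. unfold plane. vec_ext. Qed.

Lemma vdist_plane_le n (x a b : vec n) s t :
  vdist (plane x a b s t) x <= Rabs s * vnorm a + Rabs t * vnorm b.
Proof.
  unfold vdist, plane.
  replace (vsub (vadd (vadd x (vscale s a)) (vscale t b)) x)
    with (vadd (vscale s a) (vscale t b)) by vec_ext.
  rewrite <- !vnorm_scale. apply vnorm_add_le.
Qed.

Lemma plane_near n (U : vec n -> Prop) x a b rho : open_set U -> U x -> 0 < rho ->
  exists r, 0 < r /\ forall s t, Rabs s < r -> Rabs t < r ->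
    U (plane x a b s t) /\ vdist (plane x a b s t) x < rho.
Proof.
  intros HU Hx Hrho. destruct (HU x Hx) as [e [He Hball]].
  set (m := Rmin e rho).
  assert (Hm : 0 < m) by (apply Rmin_pos; lra).
  pose proof (vnorm_nonneg n a). pose proof (vnorm_nonneg n b).
  set (N := vnorm a + vnorm b + 1).
  exists (m / N). split; [apply Rdiv_lt_0_compat; unfold N; lra|].
  intros s t Hs Ht.
  assert (Hmul : forall u, Rabs u < m / N -> Rabs u * N < m).
  { intros u Hu. apply (Rmult_lt_compat_r N) in Hu; [|unfold N; lra].
    unfold Rdiv in Hu. rewrite Rmult_assoc, Rinv_l in Hu by (unfold N; lra). lra. }
  pose proof (Hmul s Hs). pose proof (Hmul t Ht).
  pose proof (Rabs_pos s). pose proof (Rabs_pos t).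
  pose proof (vdist_plane_le n x a b s t).
  assert (vdist (plane x a b s t) x < m) by (unfold N in *; nra).
  pose proof (Rmin_l e rho). pose proof (Rmin_r e rho).
  split; [apply Hball|]; unfold m in *; lra.
Qed.

Lemma line_near n (U : vec n -> Prop) x h rho : open_set U -> U x -> 0 < rho ->
  exists r, 0 < r /\ forall t, Rabs t < r ->
    U (vadd x (vscale t h)) /\ vdist (vadd x (vscale t h)) x < rho.
Proof.
  intros HU Hx Hrho. destruct (plane_near n U x h h rho HU Hx Hrho) as [r [Hr Hnear]].
  exists r. split; [exact Hr|]. intros t Ht.
  rewrite <- (plane_line n x h h). apply Hnear; [exact Ht|]. rewrite Rabs_R0. exact Hr.
Qed.

Lemma int_set_convex n (K : vec n -> Prop) x h t : convex_cone K ->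
  int_set K x -> int_set K (vadd x h) -> 0 <= t <= 1 -> int_set K (vadd x (vscale t h)).
Proof.
  intros [_ [Hscale Hadd]] [e1 [He1 B1]] [e2 [He2 B2]] Ht.
  exists (Rmin e1 e2). split; [apply Rmin_pos; lra|].
  intros y Hy. pose proof (Rmin_l e1 e2). pose proof (Rmin_r e1 e2).
  unfold vdist in Hy. set (d := vsub y (vadd x (vscale t h))) in Hy.
  assert (K1 : K (vadd x d)).
  { apply B1. unfold vdist. replace (vsub (vadd x d) x) with d by (unfold d; vec_ext).
    lra. }
  assert (K2 : K (vadd (vadd x h) d)).
  { apply B2. unfold vdist.
    replace (vsub (vadd (vadd x h) d) (vadd x h)) with d by (unfold d; vec_ext). lra. }
  replace y with (vadd (vscale (1 - t) (vadd x d)) (vscale t (vadd (vadd x h) d)))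
    by (unfold d; vec_ext).
  apply Hadd; apply Hscale; auto; lra.
Qed.

Lemma derivable_pt_lim_shift g l t0 : derivable_pt_lim g 0 l ->
  derivable_pt_lim (fun t => g (t - t0)) t0 l.
Proof.
  intros H eps He. destruct (H eps He) as [d Hd]. exists d. intros u Hu Hud.
  replace (t0 + u - t0) with (0 + u) by ring. replace (t0 - t0) with 0 by ring.
  apply Hd; assumption.
Qed.

Lemma gderiv_line n (U : vec n -> Prop) f Df x h t0 : gderiv U f Df ->
  U (vadd x (vscale t0 h)) ->
  derivable_pt_lim (fun t => f (vadd x (vscale t h))) t0 (Df (vadd x (vscale t0 h)) h).
Proof.
  intros Hf HU. pose proof (derivable_pt_lim_shift _ _ t0 (Hf _ HU h)) as H.
  eapply derivable_pt_lim_ext; [|exact H].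
  intro t. simpl. f_equal. vec_ext.
Qed.

Lemma gderiv_plane_l n (U : vec n -> Prop) f Df x a b s0 t : gderiv U f Df ->
  U (plane x a b s0 t) ->
  derivable_pt_lim (fun s => f (plane x a b s t)) s0 (Df (plane x a b s0 t) a).
Proof.
  intros Hf HU. rewrite plane_swap in HU |- *.
  eapply derivable_pt_lim_ext; [|exact (gderiv_line n U f Df _ a s0 Hf HU)].
  intro s. rewrite plane_swap. reflexivity.
Qed.

Lemma gderiv_plane_r n (U : vec n -> Prop) f Df x a b s t0 : gderiv U f Df ->
  U (plane x a b s t0) ->
  derivable_pt_lim (fun t => f (plane x a b s t)) t0 (Df (plane x a b s t0) b).
Proof. intros Hf HU. exact (gderiv_line n U f Df _ b t0 Hf HU). Qed.

Lemma MVT_abs g g' t : (forall c, Rabs c <= Rabs t -> derivable_pt_lim g c (g' c)) ->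
  exists c, Rabs c <= Rabs t /\ g t - g 0 = g' c * t.
Proof.
  intros H. destruct (Rtotal_order t 0) as [Hlt|[->|Hgt]].
  - destruct (MVT_cor2 g g' t 0 Hlt) as [c [E Hc]].
    { intros c Hc. apply H. rewrite !Rabs_left1; lra. }
    exists c. split; [rewrite !Rabs_left1; lra | lra].
  - exists 0. split; [lra | ring].
  - destruct (MVT_cor2 g g' 0 t Hgt) as [c [E Hc]].
    { intros c Hc. apply H. rewrite !Rabs_right; lra. }
    exists c. split; [rewrite !Rabs_right; lra | lra].
Qed.

Lemma second_order_MVT g g' g'' s : 0 < s ->
  (forall t, 0 <= t <= s -> derivable_pt_lim g t (g' t)) ->
  (forall t, 0 <= t <= s -> derivable_pt_lim g' t (g'' t)) ->
  exists c d, 0 < d < c /\ c < s /\ g s - g 0 - s * g' 0 = s * c * g'' d.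
Proof.
  intros Hs Hg Hg'.
  destruct (MVT_cor2 g g' 0 s Hs Hg) as [c [Ec Hc]].
  destruct (MVT_cor2 g' g'' 0 c ltac:(lra)) as [d [Ed Hd]].
  { intros t Ht. apply Hg'. lra. }
  exists c, d. split; [lra | split; [lra | nra]].
Qed.

Lemma gderiv_scale n (U : vec n -> Prop) f Df x c h : gderiv U f Df -> U x ->
  Df x (vscale c h) = c * Df x h.
Proof.
  intros Hf Hx. apply (uniqueness_limite (fun t => f (vadd x (vscale t (vscale c h)))) 0).
  { apply Hf, Hx. }
  assert (Hlin : derivable_pt_lim (fun t => c * t) 0 c).
  { pose proof (derivable_pt_lim_scal id c 0 1 (derivable_pt_lim_id 0)) as H.
    rewrite Rmult_1_r in H. exact H. }
  pose proof (derivable_pt_lim_comp _ (fun t => f (vadd x (vscale t h))) 0 _ (Df x h) Hlin) as Hc.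
  rewrite Rmult_0_r in Hc. specialize (Hc (Hf x Hx h)).
  rewrite Rmult_comm. eapply derivable_pt_lim_ext; [|exact Hc].
  intro t. unfold comp. f_equal. vec_ext.
Qed.

(* After the step [t h], the remaining step [t k] is handled by the mean value theorem, so
   continuity of [Df . k] at [x] is what makes the two partial increments add up. *)
Lemma gderiv_add n (U : vec n -> Prop) f Df x h k : open_set U -> gderiv U f Df ->
  (forall k, cont_on U (fun z => Df z k)) -> U x ->
  Df x (vadd h k) = Df x h + Df x k.
Proof.
  intros HU Hf Hcont Hx.
  apply (uniqueness_limite (fun t => f (vadd x (vscale t (vadd h k)))) 0); [apply Hf, Hx|].
  intros eps He.
  destruct (Hf x Hx h (eps / 2)) as [d Hd]; [lra|].
  destruct (Hcont k x Hx (eps / 2)) as [rho [Hrho Hclose]]; [lra|].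
  destruct (plane_near n U x h k rho HU Hx Hrho) as [r [Hr Hnear]].
  assert (Hdr : 0 < Rmin d r) by (apply Rmin_pos; [apply cond_pos | lra]).
  exists (mkposreal _ Hdr). intros t Ht0 Ht. simpl in Ht.
  pose proof (Rmin_l d r). pose proof (Rmin_r d r).
  destruct (MVT_abs (fun s => f (plane x h k t s))
                    (fun s => Df (plane x h k t s) k) t) as [c [Hct Hmvt]].
  { intros c Hc. apply (gderiv_plane_r n U f Df); [exact Hf | apply Hnear; lra]. }
  assert (Hdk : Rabs (Df (plane x h k t c) k - Df x k) < eps / 2)
    by (apply Hclose; apply Hnear; lra).
  specialize (Hd t Ht0 ltac:(lra)).
  rewrite Rplus_0_l in Hd |- *.
  replace (vadd x (vscale 0 h)) with x in Hd by vec_ext.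
  replace (vadd x (vscale 0 (vadd h k))) with x by vec_ext.
  replace (vadd x (vscale t (vadd h k))) with (plane x h k t t) by (unfold plane; vec_ext).
  rewrite plane_line in Hmvt.
  replace (f (plane x h k t t)) with (f (vadd x (vscale t h)) + Df (plane x h k t c) k * t)
    by lra.
  replace ((f (vadd x (vscale t h)) + Df (plane x h k t c) k * t - f x) / t - (Df x h + Df x k))
    with (((f (vadd x (vscale t h)) - f x) / t - Df x h) + (Df (plane x h k t c) k - Df x k))
    by (field; exact Ht0).
  eapply Rle_lt_trans; [apply Rabs_triang|]. lra.
Qed.

Definition linear_form {n} (L : vec n -> R) : Prop :=
  (forall a b, L (vadd a b) = L a + L b) /\ (forall c a, L (vscale c a) = c * L a).

Lemma gderiv_linear n (U : vec n -> Prop) f Df x : open_set U -> gderiv U f Df ->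
  (forall k, cont_on U (fun z => Df z k)) -> U x -> linear_form (Df x).
Proof.
  intros HU Hf Hcont Hx. split; intros.
  - apply (gderiv_add n U f); assumption.
  - apply (gderiv_scale n U f); assumption.
Qed.

(* the vector (0, z) *)
Definition vcons0 {m} (z : vec m) : vec (S m) :=
  fun j => Fin.caseS' j (fun _ => R) 0 z.

Lemma ebasis_FS m (i : Fin.t m) : ebasis (Fin.FS i) = vcons0 (ebasis i).
Proof.
  apply functional_extensionality. intro j. unfold vcons0, ebasis.
  apply (Fin.caseS' j); simpl.
  - destruct (Fin.eq_dec (Fin.FS i) Fin.F1) as [E|E]; [inversion E | reflexivity].
  - intro p. destruct (Fin.eq_dec (Fin.FS i) (Fin.FS p)) as [E|E];
      destruct (Fin.eq_dec i p) as [E'|E']; try reflexivity.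
    + apply Fin.FS_inj in E. contradiction.
    + subst. contradiction.
Qed.

Lemma vec_split_head m (y : vec (S m)) :
  y = vadd (vscale (y Fin.F1) (ebasis Fin.F1)) (vcons0 (fun i => y (Fin.FS i))).
Proof.
  apply functional_extensionality. intro j. unfold vadd, vscale, vcons0, ebasis.
  apply (Fin.caseS' j); simpl.
  - destruct (Fin.eq_dec Fin.F1 Fin.F1); [ring | contradiction].
  - intro p. destruct (Fin.eq_dec Fin.F1 (Fin.FS p)) as [E|E]; [inversion E | ring].
Qed.

Lemma vcons0_add m (a b : vec m) : vcons0 (vadd a b) = vadd (vcons0 a) (vcons0 b).
Proof.
  apply functional_extensionality. intro j. unfold vadd, vcons0.
  apply (Fin.caseS' j); simpl; [ring | reflexivity].
Qed.

Lemma vcons0_scale m c (a : vec m) : vcons0 (vscale c a) = vscale c (vcons0 a).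
Proof.
  apply functional_extensionality. intro j. unfold vscale, vcons0.
  apply (Fin.caseS' j); simpl; [ring | reflexivity].
Qed.

Lemma dot_ebasis n (L : vec n -> R) y : linear_form L -> dot (fun i => L (ebasis i)) y = L y.
Proof.
  revert L y. induction n as [|n IH]; intros L y [Ladd Lscale].
  - simpl. replace y with (vscale 0 y).
    + rewrite Lscale. ring.
    + apply functional_extensionality. intro j. inversion j.
  - simpl. rewrite (f_equal L (vec_split_head n y)), Ladd, Lscale.
    replace (fun i => L (ebasis (Fin.FS i))) with (fun i => L (vcons0 (ebasis i)))
      by (apply functional_extensionality; intro i; rewrite ebasis_FS; reflexivity).
    rewrite (IH (fun z => L (vcons0 z))); [ring|].
    split; intros; rewrite ?vcons0_add, ?vcons0_scale; auto.
Qed.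

Lemma second_difference_MVT n (U : vec n -> Prop) f Df D2f x a b s :
  gderiv U f Df -> gderiv U (fun z => Df z a) (fun z => D2f z a) -> 0 < s ->
  (forall u v, 0 <= u <= s -> 0 <= v <= s -> U (plane x a b u v)) ->
  exists u v, 0 < u < s /\ 0 < v < s /\
    f (plane x a b s s) - f (plane x a b s 0) - f (plane x a b 0 s) + f (plane x a b 0 0)
    = s * s * D2f (plane x a b u v) a b.
Proof.
  intros Hf Hdf Hs Hrect.
  destruct (MVT_cor2 (fun u => f (plane x a b u s) - f (plane x a b u 0))
              (fun u => Df (plane x a b u s) a - Df (plane x a b u 0) a) 0 s Hs)
    as [u [Hu1 Hu]].
  { intros u Hu. apply derivable_pt_lim_minus;
      apply (gderiv_plane_l n U f Df); auto; apply Hrect; lra. }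
  destruct (MVT_cor2 (fun v => Df (plane x a b u v) a)
              (fun v => D2f (plane x a b u v) a b) 0 s Hs) as [v [Hv1 Hv]].
  { intros v Hv. apply (gderiv_plane_r n U (fun z => Df z a) (fun z => D2f z a)); auto.
    apply Hrect; lra. }
  exists u, v. split; [lra | split; [lra|]].
  simpl in Hu1, Hv1. rewrite Rminus_0_r in Hu1, Hv1.
  replace (f (plane x a b s s) - f (plane x a b s 0) - f (plane x a b 0 s) + f (plane x a b 0 0))
    with ((Df (plane x a b u s) a - Df (plane x a b u 0) a) * s) by lra.
  rewrite Hv1. ring.
Qed.

(* Both orders of differentiation compute the same second difference on a small square. *)
Lemma schwarz_symmetry n (U : vec n -> Prop) f Df D2f x a b : open_set U ->
  gderiv U f Df -> (forall a, gderiv U (fun z => Df z a) (fun z => D2f z a)) ->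
  (forall a b, cont_on U (fun z => D2f z a b)) -> U x ->
  D2f x a b = D2f x b a.
Proof.
  intros HU Hf Hdf Hcont Hx.
  assert (Hclose : forall eps, 0 < eps -> Rabs (D2f x a b - D2f x b a) < 2 * eps).
  { intros eps Heps.
    destruct (Hcont a b x Hx eps Heps) as [r1 [Hr1 C1]].
    destruct (Hcont b a x Hx eps Heps) as [r2 [Hr2 C2]].
    destruct (plane_near n U x a b (Rmin r1 r2) HU Hx) as [r [Hr Hnear]];
      [apply Rmin_pos; lra|].
    pose proof (Rmin_l r1 r2). pose proof (Rmin_r r1 r2).
    set (s := r / 2). assert (Hs : 0 < s) by (unfold s; lra).
    assert (Hrect : forall u v, 0 <= u <= s -> 0 <= v <= s ->
               U (plane x a b u v) /\ vdist (plane x a b u v) x < Rmin r1 r2).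
    { intros u v Hu Hv. apply Hnear; rewrite Rabs_right; unfold s in *; lra. }
    destruct (second_difference_MVT n U f Df D2f x a b s Hf (Hdf a) Hs)
      as [u1 [v1 [Hu1 [Hv1 E1]]]]; [intros; apply Hrect; auto|].
    destruct (second_difference_MVT n U f Df D2f x b a s Hf (Hdf b) Hs)
      as [u2 [v2 [Hu2 [Hv2 E2]]]].
    { intros u v Hu Hv. rewrite plane_swap. apply Hrect; auto. }
    rewrite !(plane_swap n x b a) in E2.
    assert (E : D2f (plane x a b u1 v1) a b = D2f (plane x a b v2 u2) b a).
    { apply (Rmult_eq_reg_l (s * s)); [lra | nra]. }
    destruct (Hrect u1 v1) as [I1 J1]; [lra | lra |].
    destruct (Hrect v2 u2) as [I2 J2]; [lra | lra |].
    specialize (C1 _ I1 ltac:(lra)). specialize (C2 _ I2 ltac:(lra)).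
    rewrite E in C1.
    replace (D2f x a b - D2f x b a)
      with (- (D2f (plane x a b v2 u2) b a - D2f x a b) + (D2f (plane x a b v2 u2) b a - D2f x b a))
      by ring.
    eapply Rle_lt_trans; [apply Rabs_triang|]. rewrite Rabs_Ropp. lra. }
  destruct (Req_dec (D2f x a b) (D2f x b a)) as [E|E]; [exact E|].
  pose proof (Rabs_pos_lt _ (Rminus_eq_contra _ _ E)).
  specialize (Hclose (Rabs (D2f x a b - D2f x b a) / 4) ltac:(lra)). lra.
Qed.

Section SymmetricDerivatives.

Context {n : nat} {U : vec n -> Prop} {F : vec n -> R} {D1 : vec n -> vec n -> R}
  {D2 : vec n -> vec n -> vec n -> R} {D3 : vec n -> vec n -> vec n -> vec n -> R}
  (HU : open_set U) (HC : C3_with U F D1 D2 D3).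

Lemma D2_sym x a b : U x -> D2 x a b = D2 x b a.
Proof.
  destruct HC as (HD1 & HD2 & _ & _ & HC2 & _).
  exact (schwarz_symmetry n U F D1 D2 x a b HU HD1 HD2 HC2).
Qed.

Lemma D3_sym23 x a b c : U x -> D3 x a b c = D3 x a c b.
Proof.
  destruct HC as (_ & HD2 & HD3 & _ & _ & HC3).
  exact (schwarz_symmetry n U (fun z => D1 z a) (fun z => D2 z a) (fun z => D3 z a) x b c
           HU (HD2 a) (HD3 a) (HC3 a)).
Qed.

Lemma D3_sym12 x a b c : U x -> D3 x a b c = D3 x b a c.
Proof.
  destruct HC as (_ & _ & HD3 & _ & _ & _). intros Hx.
  destruct (line_near n U x c 1 HU Hx Rlt_0_1) as [r [Hr Hnear]].
  apply (uniqueness_limite (fun t => D2 (vadd x (vscale t c)) a b) 0); [apply HD3, Hx|].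
  apply (derivable_pt_lim_locally_ext (fun t => D2 (vadd x (vscale t c)) b a) _ 0 (- r) r);
    [lra | | apply HD3, Hx].
  intros t Ht. apply D2_sym, Hnear. apply Rabs_def1; lra.
Qed.

Lemma D3_sym x h y : U x -> D3 x h h y = D3 x y h h.
Proof. intros Hx. rewrite (D3_sym23 x h h y Hx). exact (D3_sym12 x h y h Hx). Qed.

Lemma dot_grad x y : U x -> dot (grad D1 x) y = D1 x y.
Proof.
  destruct HC as (HD1 & _ & _ & HC1 & _ & _). intros Hx.
  exact (dot_ebasis n (D1 x) y (gderiv_linear n U F D1 x HU HD1 HC1 Hx)).
Qed.

Lemma dot_hess_app x h y : U x -> dot (hess_app D2 x h) y = D2 x h y.
Proof.
  destruct HC as (_ & HD2 & _ & _ & HC2 & _). intros Hx.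
  exact (dot_ebasis n (D2 x h) y (gderiv_linear n U _ _ x HU (HD2 h) (HC2 h) Hx)).
Qed.

Lemma dot_third_app x h u y : U x -> dot (third_app D3 x h u) y = D3 x h u y.
Proof.
  destruct HC as (_ & _ & HD3 & _ & _ & HC3). intros Hx.
  exact (dot_ebasis n (D3 x h u) y (gderiv_linear n U _ _ x HU (HD3 h u) (HC3 h u) Hx)).
Qed.

Lemma gradient_gap_MVT x h y s : 0 < s -> (forall t, 0 <= t <= s -> U (vadd x (vscale t h))) ->
  exists c d, 0 < d < c /\ c < s /\
    D1 (vadd x (vscale s h)) y - D1 x y - s * D2 x y h = s * c * D3 (vadd x (vscale d h)) y h h.
Proof.
  destruct HC as (_ & HD2 & HD3 & _ & _ & _). intros Hs Hseg.
  replace (D1 x y) with (D1 (vadd x (vscale 0 h)) y) by (f_equal; vec_ext).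
  replace (D2 x y h) with (D2 (vadd x (vscale 0 h)) y h) by (f_equal; vec_ext).
  apply (second_order_MVT (fun t => D1 (vadd x (vscale t h)) y)
           (fun t => D2 (vadd x (vscale t h)) y h) (fun t => D3 (vadd x (vscale t h)) y h h));
    [exact Hs | |]; intros t Ht.
  - exact (gderiv_line n U _ _ x h t (HD2 y) (Hseg t Ht)).
  - exact (gderiv_line n U _ _ x h t (HD3 y h) (Hseg t Ht)).
Qed.

End SymmetricDerivatives.

Section CurvatureConditions.

Context {n : nat} {K : vec n -> Prop} {F : vec n -> R} {D1 : vec n -> vec n -> R}
  {D2 : vec n -> vec n -> vec n -> R} {D3 : vec n -> vec n -> vec n -> vec n -> R}
  (HK : convex_cone K) (HC : C3_with (int_set K) F D1 D2 D3).

Let HU : open_set (int_set K) := int_set_open n K.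

Lemma dual_third_app_iff x h : int_set K x ->
  dual_cone K (vopp (third_app D3 x h h)) <-> forall y, K y -> D3 x y h h <= 0.
Proof.
  intros Hx. unfold dual_cone.
  setoid_rewrite dot_opp_l. setoid_rewrite (dot_third_app HU HC x h h _ Hx).
  setoid_rewrite (D3_sym HU HC x h _ Hx).
  split; intros H y Hy; specialize (H y Hy); lra.
Qed.

Lemma negative_curvature_iff_dual :
  negative_curvature K D3 <->
  forall x h, int_set K x -> dual_cone K (vopp (third_app D3 x h h)).
Proof.
  split.
  - intros Hneg x h Hx. apply (dual_third_app_iff x h Hx).
    intros y Hy. exact (Hneg x y Hx Hy h).
  - intros Hdual x h Hx Hh u. exact (proj1 (dual_third_app_iff x u Hx) (Hdual x u Hx) h Hh).
Qed.

Lemma dual_gradient_gap_iff x h : int_set K x -> int_set K (vadd x h) ->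
  dual_cone K (vsub (hess_app D2 x h) (vsub (grad D1 (vadd x h)) (grad D1 x))) <->
  forall y, K y -> D1 (vadd x h) y - D1 x y <= D2 x y h.
Proof.
  intros Hx Hxh. unfold dual_cone.
  setoid_rewrite dot_sub_l. setoid_rewrite dot_sub_l.
  setoid_rewrite (dot_hess_app HU HC x h _ Hx). setoid_rewrite (D2_sym HU HC x h _ Hx).
  setoid_rewrite (dot_grad HU HC x _ Hx). setoid_rewrite (dot_grad HU HC _ _ Hxh).
  split; intros H y Hy; specialize (H y Hy); lra.
Qed.

Lemma third_dual_gradient_gap :
  (forall x h, int_set K x -> dual_cone K (vopp (third_app D3 x h h))) ->
  forall x h, int_set K x -> int_set K (vadd x h) ->
    dual_cone K (vsub (hess_app D2 x h) (vsub (grad D1 (vadd x h)) (grad D1 x))).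
Proof.
  intros Hdual x h Hx Hxh. apply (dual_gradient_gap_iff x h Hx Hxh). intros y Hy.
  destruct (gradient_gap_MVT HC x h y 1 Rlt_0_1) as [c [d [Hdc [Hc Hgap]]]].
  { intros t Ht. exact (int_set_convex n K x h t HK Hx Hxh Ht). }
  replace (vadd x (vscale 1 h)) with (vadd x h) in Hgap by vec_ext.
  assert (Hd : int_set K (vadd x (vscale d h))) by (apply int_set_convex; auto; lra).
  pose proof (proj1 (dual_third_app_iff _ h Hd) (Hdual _ h Hd) y Hy).
  nra.
Qed.

(* If [D^3F(x)[y,h,h] > 0], it stays positive near [x] by continuity, and the
   mean-value form of the gradient gap along a short step [s h] becomes positive. *)
Lemma gradient_gap_third_dual :
  (forall x h, int_set K x -> int_set K (vadd x h) ->
    dual_cone K (vsub (hess_app D2 x h) (vsub (grad D1 (vadd x h)) (grad D1 x)))) ->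
  forall x h, int_set K x -> dual_cone K (vopp (third_app D3 x h h)).
Proof.
  intros Hgap x h Hx. apply (dual_third_app_iff x h Hx). intros y Hy.
  destruct (Rle_or_lt (D3 x y h h) 0) as [Hle|Hpos]; [exact Hle | exfalso].
  pose proof HC as (_ & HD2 & _ & _ & _ & HC3).
  destruct (HC3 y h h x Hx (D3 x y h h / 2)) as [rho [Hrho Hcont]]; [lra|].
  destruct (line_near n _ x h rho HU Hx Hrho) as [r [Hr Hnear]].
  set (s := r / 2). assert (Hs : 0 < s) by (unfold s; lra).
  assert (Hseg : forall t, 0 <= t <= s ->
            int_set K (vadd x (vscale t h)) /\ vdist (vadd x (vscale t h)) x < rho).
  { intros t Ht. apply Hnear. rewrite Rabs_right; unfold s in *; lra. }
  destruct (gradient_gap_MVT HC x h y s Hs) as [c [d [Hdc [Hcs Hgap_eq]]]].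
  { intros t Ht. apply Hseg, Ht. }
  destruct (Hseg s) as [Hxs _]; [lra|].
  pose proof (proj1 (dual_gradient_gap_iff x _ Hx Hxs) (Hgap x _ Hx Hxs) y Hy) as Hle.
  rewrite (gderiv_scale n _ _ _ x s h (HD2 y) Hx) in Hle.
  assert (Hd : 0 < D3 (vadd x (vscale d h)) y h h).
  { destruct (Hseg d) as [Hxd Hdist]; [lra|].
    pose proof (Rabs_def2 _ _ (Hcont _ Hxd Hdist)). lra. }
  assert (0 < s * c * D3 (vadd x (vscale d h)) y h h)
    by (apply Rmult_lt_0_compat; [apply Rmult_lt_0_compat|]; lra).
  lra.
Qed.

End CurvatureConditions.

Theorem mainTheorem15 (n : nat) (K : vec n -> Prop) (F : vec n -> R) (nu : R)
  (D1 : vec n -> vec n -> R) (D2 : vec n -> vec n -> vec n -> R)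
  (D3 : vec n -> vec n -> vec n -> vec n -> R) :
  regular_cone K ->
  normal_barrier K F nu D1 D2 D3 ->
  (negative_curvature K D3 <->
     (forall x h, int_set K x ->
        dual_cone K (vopp (third_app D3 x h h)))) /\
  ((forall x h, int_set K x ->
        dual_cone K (vopp (third_app D3 x h h))) <->
     (forall x h, int_set K x -> int_set K (vadd x h) ->
        dual_cone K (vsub (hess_app D2 x h)
                          (vsub (grad D1 (vadd x h)) (grad D1 x))))).
Proof.
  intros (_ & HK & _) ((HC & _) & _).
  split; [exact (negative_curvature_iff_dual HC)|].
  split; [exact (third_dual_gradient_gap HK HC) | exact (gradient_gap_third_dual HC)].
Qed.
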